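(* Let $(S,+)$ be a commutative cancellative semigroup with no identity element such that its difference group $S-S$ carries a multiplication $\cdot$ making $(S-S,+,\cdot)$ an integral domain. Suppose $\kappa$ is an infinite regular cardinal, $|S|=\kappa$, and $((S-S)\setminus\{0\},\cdot)$ is a very weakly cancellative semigroup. Then every PP-rich set in $S$ has cardinality $\kappa$.
   Context: $S-S=\{a-b:a,b\in S\}$ is the difference group of $S$. $\mathbb{P}$ is the set of polynomial functions $S-S\to S-S$ in one variable with coefficients in $S-S$ and zero constant term; $\mathcal{P}_f(\mathbb{P})$ the set of its nonempty finite subsets. $A\subseteq S$ is PP-rich if for every $R\in\mathcal{P}_f(\mathbb{P})$ there exist $a,x\in S$ with $\{a+f(x): f\in R\}\subseteq A$. An infinite semigroup $(T,\cdot)$ of cardinality $\nu$ is very weakly cancellative if the union of fewer than $\nu$ sets of the form $\{x: a x=b\}$ has cardinality $<\nu$, and likewise for sets of the form $\{x: x a=b\}$. *)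

From HB Require Import structures.
From mathcomp Require Import all_boot all_order all_algebra.
From mathcomp Require Import boolp classical_sets cardinality.
Set Implicit Arguments. Unset Strict Implicit. Unset Printing Implicit Defensive.
Import GRing.Theory.
Local Open Scope classical_set_scope.
Local Open Scope ring_scope.

Definition card_lt T U (A : set T) (B : set U) : Prop :=
  (A #<= B)%card /\ ~ (B #<= A)%card.

Definition infinite_regular_card X (K : set X) : Prop :=
  infinite_set K /\
  forall (I : Type) (J : set I) (F : I -> set X),
    card_lt J K -> (forall i, J i -> card_lt (F i) K) ->
    card_lt (\bigcup_(i in J) F i) K.

Definition very_weakly_cancellative X (op : X -> X -> X) (T : set X) : Prop :=
  (forall x y, T x -> T y -> T (op x y)) /\
  (forall x y z, op x (op y z) = op (op x y) z) /\
  infinite_set T /\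
  (forall (I : Type) (J : set I) (a b : I -> X),
     card_lt J T -> (forall i, J i -> T (a i) /\ T (b i)) ->
     card_lt (\bigcup_(i in J) [set x | T x /\ op (a i) x = b i]) T) /\
  (forall (I : Type) (J : set I) (a b : I -> X),
     card_lt J T -> (forall i, J i -> T (a i) /\ T (b i)) ->
     card_lt (\bigcup_(i in J) [set x | T x /\ op x (a i) = b i]) T).

(* S is (a copy of) a commutative cancellative semigroup without identity,
   realized inside its difference group D = S - S. *)
Definition semigroup_with_difference_group (D : zmodType) (S : set D) : Prop :=
  (forall a b, S a -> S b -> S (a + b)) /\
  ~ S 0 /\
  (forall d : D, exists a b, S a /\ S b /\ d = a - b).

Definition zero_const_poly (D : idomainType) (p : {poly D}) : Prop := p`_0 = 0.

Definition PP_rich (D : idomainType) (S A : set D) : Prop :=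
  A `<=` S /\
  forall R : seq {poly D}, R != [::] -> (forall p, p \in R -> zero_const_poly p) ->
    exists a x, S a /\ S x /\ forall p, p \in R -> A (a + p.[x]).

From HB Require Import structures.
From mathcomp Require Import all_boot all_order all_algebra.
From mathcomp Require Import boolp classical_sets cardinality.
Local Open Scope classical_set_scope.
Local Open Scope ring_scope.
Set Implicit Arguments. Unset Strict Implicit. Unset Printing Implicit Defensive.
Import GRing.Theory.

(* If A were small, so would be B := A - A and the set B / B of all y with
   w y in B for some nonzero w in B, by regularity of |S|.  But PP-richness,
   applied to the polynomials 0, X and yX, gives for each y in S some a, x
   with a, a + x, a + y x in A, i.e. x and y x in B with x <> 0 (as 0 is not in S); hence
   S is contained in B / B, a contradiction.  Cancellation in the integral
   domain S - S already makes w * _ injective. *)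

Lemma card_le_lt_trans (T U : Type) (X Y : set T) (K : set U) :
  (X #<= Y)%card -> card_lt Y K -> card_lt X K.
Proof.
move=> XY [YK nKY]; split; first exact: card_le_trans XY YK.
by move=> KX; apply: nKY; apply: card_le_trans KX XY.
Qed.

Definition diff_set (D : zmodType) (A : set D) : set D :=
  \bigcup_(a in A) [set a - b | b in A].

Definition ratio_set (D : idomainType) (B : set D) : set D :=
  \bigcup_(w in B `\ 0) ((fun y => w * y) @^-1` B).

Section SmallSets.

Variables (D : idomainType) (K : set D).
Hypothesis K_regular : infinite_regular_card K.

Lemma card_lt_diff_set (A : set D) : card_lt A K -> card_lt (diff_set A) K.
Proof.
move=> A_small; apply: K_regular.2 => // a _.
exact: card_le_lt_trans (card_image_le (fun b => a - b) A) A_small.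
Qed.

Lemma card_lt_ratio_set (B : set D) : card_lt B K -> card_lt (ratio_set B) K.
Proof.
move=> B_small; apply: K_regular.2.
  exact: card_le_lt_trans (card_le_setD _ _) B_small.
move=> w [_ /eqP w_neq0]; apply: card_le_lt_trans B_small.
by apply: card_ge_preimage => y z _ _ /=; exact: mulfI.
Qed.

End SmallSets.

Lemma PP_rich_dilation (D : idomainType) (S A : set D) (y : D) :
  PP_rich S A ->
  exists a x, S x /\ A a /\ A (a + x) /\ A (a + y * x).
Proof.
move=> [_ rich].
have zero_const : forall p, p \in [:: 0; 'X; y *: 'X] -> zero_const_poly p.
  by move=> p; rewrite !inE => /or3P[] /eqP ->;
     rewrite /zero_const_poly ?coef0 ?coefZ ?coefX ?mulr0.
have [a [x [_ [Sx inA]]]] := rich [:: 0; 'X; y *: 'X] isT zero_const.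
exists a, x; split=> //; split; last split.
- by have := inA 0; rewrite hornerC addr0; apply; rewrite !inE eqxx.
- by have := inA 'X; rewrite hornerX; apply; rewrite !inE eqxx orbT.
- by have := inA (y *: 'X); rewrite hornerZ hornerX; apply; rewrite !inE eqxx !orbT.
Qed.

Lemma PP_rich_sub_ratio_set (D : idomainType) (S A : set D) :
  ~ S 0 -> PP_rich S A -> S `<=` ratio_set (diff_set A).
Proof.
move=> S0 richA y _.
have [a [x [Sx [Aa [Aax Aayx]]]]] := PP_rich_dilation y richA.
exists x.
  split; first by exists (a + x) => //; exists a => //; rewrite addrC addKr.
  by move=> /= x0; apply: S0; rewrite -x0.
by exists (a + y * x) => //; exists a => //; rewrite addrC addKr mulrC.
Qed.

Theorem theorem5p6 (D : idomainType) (S : set D) :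
  semigroup_with_difference_group S ->
  infinite_regular_card S ->
  very_weakly_cancellative (@GRing.mul D) [set x : D | x != 0] ->
  forall A : set D, PP_rich S A -> (A #= S)%card.
Proof.
move=> [_ [S0 _]] S_regular _ A richA.
have AS : (A #<= S)%card by apply: subset_card_le; case: richA.
apply/card_eqPle; split=> //; apply: contrapT => nSA.
have A_small : card_lt A S by split.
have [_ nS_ratio] := card_lt_ratio_set S_regular
  (card_lt_diff_set S_regular A_small).
exact/nS_ratio/subset_card_le/PP_rich_sub_ratio_set.
Qed.
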